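(* Let $K$ be a connected 4-regular simple graph with an odd number of vertices, let $v,w$ be adjacent vertices of $K$ with no common neighbour, let the neighbours of $w$ be $v,a,b,c$ and the neighbours of $v$ be $w,d,e,f$, and let $R=K-\{v,w\}$. Let $p_1\cup p_2$ be a partition of $\{a,b,c,d,e,f\}$ where $p_1$ consists either of all of $\{a,b,c\}$ together with exactly one of $\{d,e,f\}$, or of all of $\{d,e,f\}$ together with exactly one of $\{a,b,c\}$. Let $x$ be the element of $p_1$ which is alone from its trio. Let $\tau\in\mathcal{R}_{p_1,p_2}$ and let $t$ be the tree of the 2-forest of $\tau$ containing the vertices of $p_1$. Then there is a unique vertex $y$ with the following properties: (1) either $y\in p_1$ and $y$ has degree 2 in $t$, or $y\notin p_1$ and $y$ has degree 3 in $t$; (2) removing $y$ from $t$ gives a component containing exactly two vertices of $p_1$ and a component containing exactly one vertex of $p_1$; (3) either $x=y$ or $x$ lies in one of the components of $t-y$ containing exactly one vertex of $p_1$.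
   Context: A spanning 2-forest is a spanning forest with exactly two trees (a tree may be a single vertex). For a bipartition $P=\{P_1,P_2\}$ of a subset of $V(R)$, $\mathcal{R}_P$ is the set of bipartitions of $E(R)$ such that one part is the edge set of a spanning tree of $R$ and the other is the edge set of a spanning 2-forest of $R$ with one tree containing all vertices of $P_1$ and the other containing all vertices of $P_2$. In $R$ the vertices $a,\dots,f$ have degree 3 and all other vertices have degree 4. *)

From mathcomp Require Import all_boot.
Set Implicit Arguments. Unset Strict Implicit. Unset Printing Implicit Defensive.

(* Graphs on a finType V: edges are 2-element sets {x,y}.  An edge set is a
   {set {set V}}; subgraphs (trees, forests) are given by their edge sets. *)
Section Graphs.
Variable V : finType.

Definition sadj (S : {set {set V}}) : rel V :=
  fun x y => (x != y) && ([set x; y] \in S).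

Definition edges_on (adj : rel V) (W : {set V}) : {set {set V}} :=
  [set e | [exists x, exists y, [&& x \in W, y \in W, adj x y & e == [set x; y]]]].

Definition acyclic (S : {set {set V}}) : Prop :=
  forall c : seq V, 2 < size c -> uniq c -> ~~ cycle (sadj S) c.

Definition spanning_tree (W : {set V}) (E T : {set {set V}}) : Prop :=
  [/\ T \subset E, acyclic T &
      forall x y, x \in W -> y \in W -> connect (sadj T) x y].

Definition spanning_2forest_sep (W : {set V}) (E F : {set {set V}})
    (P1 P2 : {set V}) : Prop :=
  [/\ F \subset E, acyclic F &
    (exists r1 r2, [/\ r1 \in W, r2 \in W & ~~ connect (sadj F) r1 r2] /\
      [/\ (forall z, z \in W -> connect (sadj F) r1 z || connect (sadj F) r2 z),
      {subset P1 <= connect (sadj F) r1} &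
      {subset P2 <= connect (sadj F) r2}])].

Definition in_RP (W : {set V}) (E : {set {set V}}) (P1 P2 : {set V})
    (T F : {set {set V}}) : Prop :=
  [/\ T :|: F = E, T :&: F = set0, spanning_tree W E T &
      spanning_2forest_sep W E F P1 P2].

Definition tree_vertices (F : {set {set V}}) (r : V) : {set V} :=
  [set z | connect (sadj F) r z].

Definition deg_in (F : {set {set V}}) (Vt : {set V}) (y : V) : nat :=
  #|[set z in Vt | sadj F y z]|.

Definition adj_minus (F : {set {set V}}) (Vt : {set V}) (y : V) : rel V :=
  fun u z => [&& sadj F u z, u \in Vt, z \in Vt, u != y & z != y].

Definition comp_minus (F : {set {set V}}) (Vt : {set V}) (y z : V) : {set V} :=
  [set u | connect (adj_minus F Vt y) z u].

End Graphs.

From mathcomp Require Import all_boot.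
Set Implicit Arguments. Unset Strict Implicit. Unset Printing Implicit Defensive.

(* Let t be the tree of the forest containing x, and Q = p1 \ {x}.  Every vertex of R
   has degree at most 4, at most 3 if it is adjacent to v or w, and it keeps at least one
   of its edges in the spanning tree; so t has maximum degree 3, and degree at most 2 on
   p1.  The required y is the gate of x to Q in t: the vertex of the subtree spanned by
   Q nearest to x.  It exists because stepping from x towards Q only enlarges the side
   of x, and it is unique because two distinct gates would force Q into one branch at
   one of them, or onto the side of x at both.  At the gate, the degree bound leaves
   p1 \ {y} no room to meet more than deg y branches of t - y, while x is alone in its
   branch and Q meets at least two of them; so the branches split p1 \ {y} into one pair
   and singletons, which is (1)-(3).  Conversely (1)-(3) force y to be the gate. *)

Section Connect.
Variable T : finType.
Implicit Types (e : rel T) (a b : T).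

Lemma connect_sub_from e (e' : rel T) a b :
  (forall s t, connect e a s -> e s t -> e' s t) -> connect e a b -> connect e' a b.
Proof.
move=> ee' /connectP[p + ->]; elim: p a ee' => [|c p IHp] a ee' /=; first by [].
move=> /andP[eac pc].
apply: connect_trans (connect1 (ee' _ _ (connect0 _ a) eac)) (IHp _ _ pc) => s t cs.
exact/ee'/(connect_trans (connect1 eac)).
Qed.

Lemma connect_last_step e a b : connect e a b -> a != b ->
  exists2 c, connect [rel s t | [&& e s t, s != b & t != b]] a c & e c b.
Proof.
move=> /connectP[p + ->]; elim: p a => [|c p IHp] a /=; first by rewrite eqxx.
move=> /andP[eac pc] ab; have [cb | cb] := eqVneq c (last c p); first by exists a; rewrite // -cb.
have [d cd db] := IHp c pc cb; exists d => //.
by apply: connect_trans cd; apply: connect1; rewrite /= eac ab.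
Qed.

End Connect.

Lemma sadj_sym (V : finType) (F : {set {set V}}) : symmetric (sadj F).
Proof. by move=> u z; rewrite /sadj eq_sym setUC. Qed.

Section Branches.
Variables (V : finType) (F : {set {set V}}) (r : V).
Hypothesis F_acyclic : acyclic F.
Local Notation Vt := (tree_vertices F r).
Local Notation branch := (comp_minus F Vt).
Local Notation Nb y := [set z in Vt | sadj F y z].

Lemma adj_minus_sym y : symmetric (adj_minus F Vt y).
Proof.
move=> u z; rewrite /adj_minus sadj_sym.
by case: (u \in Vt); case: (z \in Vt); case: (u != y); case: (z != y); rewrite ?andbF.
Qed.

Lemma in_branch y z u : (u \in branch y z) = connect (adj_minus F Vt y) z u.
Proof. by rewrite inE. Qed.

Lemma branch_refl y z : z \in branch y z.
Proof. by rewrite in_branch. Qed.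

Lemma branch_sym y z u : (u \in branch y z) = (z \in branch y u).
Proof. by rewrite !in_branch (sym_connect_sym (adj_minus_sym y)). Qed.

Lemma branch_eq y z u : u \in branch y z -> branch y u = branch y z.
Proof.
move=> zu; apply/setP => s; rewrite !in_branch; apply/idP/idP; last first.
  by apply: connect_trans; rewrite -in_branch -branch_sym.
by apply: connect_trans; rewrite -in_branch.
Qed.

Lemma branch_sub y z u : u \in branch y z -> u != z -> u \in Vt :\ y.
Proof.
rewrite in_branch => /connectP[p + ->]; elim/last_ind: p => [|p s _]; first by rewrite eqxx.
by rewrite rcons_path last_rcons in_setD1 => /andP[_ /and5P[_ _ -> _ ->]].
Qed.

Lemma branch_notin y z : z != y -> y \notin branch y z.
Proof. by move=> zy; apply/negP => /branch_sub; rewrite eq_sym => /(_ zy); rewrite setD11. Qed.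

Lemma branch_neq y z u : z != y -> u \in branch y z -> u != y.
Proof. by move=> zy zu; apply: contraNneq (branch_notin zy) => uy; rewrite -{1}uy. Qed.

Lemma tree_vertices_closed : closed (sadj F) Vt.
Proof.
move=> s t st; rewrite !inE; apply/idP/idP => rs; apply: connect_trans rs (connect1 _) => //.
by rewrite sadj_sym.
Qed.

Lemma branch_nbr y u : y \in Vt -> u \in Vt :\ y -> exists2 n, n \in Nb y & u \in branch y n.
Proof.
move=> yV /setD1P[uy uV].
have uy_conn : connect (sadj F) u y.
  move: uV yV; rewrite !inE (sym_connect_sym (@sadj_sym _ F)); exact: connect_trans.
have [n un ny] := connect_last_step uy_conn uy.
have nV : n \in Vt by rewrite (tree_vertices_closed ny).
exists n; first by rewrite inE nV sadj_sym.
rewrite branch_sym in_branch; apply: connect_sub_from un => s t us /and3P[st sy ty].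
have sV : s \in Vt.
  by rewrite -(closed_connect tree_vertices_closed (connect_sub _ us)) // => ? ? /andP[/connect1].
by rewrite /adj_minus st sV -(tree_vertices_closed st) sV sy ty.
Qed.

Lemma nbr_branch_eq y n1 n2 : sadj F y n1 -> sadj F y n2 -> n2 \in branch y n1 -> n1 = n2.
Proof.
move=> yn1 /[swap] /[!in_branch] /connectP[p pth ->]; apply: contraTeq => n12.
case: (shortenP pth) n12 => p' pth' uniq_p' _ n12; apply/negP => yn2.
have avoid_y : all (fun u => u != y) p'.
  by elim: {uniq_p' n12 yn2}p' (n1) pth' => //= c q IHq a /andP[/and5P[_ _ _ _ ->] /IHq].
have n1y : n1 != y by rewrite eq_sym; case/andP: yn1.
have cyc : cycle (sadj F) [:: y, n1 & p'].
  by rewrite /cycle /= yn1 rcons_path sadj_sym yn2 andbT (sub_path _ pth') // => s t /andP[].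
apply: (negP (F_acyclic _ _) cyc).
- by case: {pth' uniq_p' avoid_y yn2 cyc}p' n12 => //=; rewrite eqxx.
rewrite /= -/(uniq (n1 :: p')) uniq_p' andbT in_cons eq_sym (negbTE n1y) /=.
by apply/negP => /(allP avoid_y); rewrite eqxx.
Qed.

Lemma branch_disjoint y z u : y \in Vt -> sadj F y z -> u \in branch y z -> u \notin branch z y.
Proof.
move=> yV yz zu; rewrite branch_sym in_branch; apply/negP => uy_conn.
have zy : z != y by rewrite eq_sym; case/andP: yz.
have uy : u != y by have [-> //|/(branch_sub zu)/setD1P[]] := eqVneq u z.
have [c uc /and5P[cy cV _ cz _]] := connect_last_step uy_conn uy.
have cz_br : c \in branch y z.
  rewrite -(branch_eq zu) in_branch; apply: (connect_sub _ uc) => s t.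
  move=> /and3P[/and5P[st sV tV _ _] sy ty]; apply: connect1.
  by rewrite /adj_minus st sV tV sy ty.
have yc : sadj F y c by rewrite sadj_sym.
by move: cz; rewrite (nbr_branch_eq yz yc cz_br) eqxx.
Qed.

Lemma branch_cover y1 y2 u : y1 \in Vt -> y2 \in Vt -> y1 != y2 -> u \in Vt ->
  (u \in branch y1 y2) || (u \in branch y2 y1).
Proof.
move=> y1V y2V y12 uV; case/boolP: (u \in branch y1 y2) => //= u_off.
have [-> | uy1] := eqVneq u y1; first exact: branch_refl.
have uV1 : u \in Vt :\ y1 by rewrite in_setD1 uy1 uV.
have [n /setIdP[nV y1n] un] := branch_nbr y1V uV1.
have y2_off : y2 \notin branch y1 u by rewrite branch_sym.
have ny2 : n != y2.
  by apply: contraNneq y2_off => <-; rewrite (branch_eq un) branch_refl.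
rewrite branch_sym in_branch; apply: connect_trans (connect1 (_ : adj_minus F Vt y2 n y1)).
  move: un; rewrite branch_sym in_branch; apply: connect_sub_from => s t ns st.
  have [su tu] : s \in branch y1 u /\ t \in branch y1 u.
    by rewrite !in_branch ns (connect_trans ns (connect1 st)).
  move: st => /and5P[st sV tV _ _]; rewrite /adj_minus st sV tV.
  have sy2 : s != y2 by apply: contraNneq y2_off => <-.
  have ty2 : t != y2 by apply: contraNneq y2_off => <-.
  by rewrite sy2 ty2.
by rewrite /adj_minus sadj_sym y1n nV y1V ny2.
Qed.

Lemma card_le_deg y (S : {set V}) : y \in Vt -> S \subset Vt :\ y ->
  {in S &, forall u v, u \in branch y v -> u = v} -> #|S| <= deg_in F Vt y.
Proof.
move=> yV /subsetP SV Ssep.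
pose f u := odflt u [pick n | (n \in Nb y) && (u \in branch y n)].
have fP u : u \in S -> f u \in Nb y /\ u \in branch y (f u).
  rewrite /f => uS; case: pickP => [n /andP[]|none] //=.
  by have [n nN un] := branch_nbr yV (SV u uS); move: (none n); rewrite nN un.
rewrite -(card_in_imset (f := f)) => [|u v uS vS fuv].
  by apply/subset_leq_card/subsetP => _ /imsetP[u uS ->]; case: (fP u uS).
by apply: Ssep => //; rewrite (branch_eq (fP v vS).2) -fuv; case: (fP u uS).
Qed.

End Branches.

Section Gate.
Variables (V : finType) (F : {set {set V}}) (x : V) (Q : {set V}).
Hypothesis F_acyclic : acyclic F.
Local Notation Vt := (tree_vertices F x).
Local Notation branch := (comp_minus F Vt).
Hypotheses (Q_tree : Q \subset Vt) (Q_neq0 : Q != set0).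

(* [blocks y]: y lies on every path from x to Q; [splits y]: y lies on the subtree
   spanned by Q. *)
Definition blocks y := (y == x) || [disjoint branch y x & Q].
Definition splits y := [forall z in Vt :\ y, ~~ (Q \subset branch y z)].
Definition gate y := [&& y \in Vt, blocks y & splits y].

Lemma root_in_tree : x \in Vt.
Proof. by rewrite inE. Qed.

Lemma blocks_nbr y n : y \in Vt -> blocks y -> sadj F y n -> Q \subset branch y n ->
  blocks n /\ (y |: branch y x) \proper (n |: branch n x).
Proof.
move=> yV yx yn Qn; have [q0 q0Q] := set0Pn _ Q_neq0.
have yn_neq : y != n by case/andP: yn.
have nV : n \in Vt by rewrite -(tree_vertices_closed x yn).
have x_off : x \notin branch y n.
  case/orP: yx => [/eqP yx|disj]; first by rewrite -{1}yx branch_notin // eq_sym.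
  apply/negP => /branch_eq xn.
  have q0x : q0 \in branch y x by rewrite xn (subsetP Qn).
  by have := disjointFr disj q0x; rewrite q0Q.
have nx : branch n x = branch n y.
  by apply: branch_eq; have := branch_cover yV nV yn_neq root_in_tree; rewrite (negbTE x_off).
split.
  apply/orP; right; rewrite nx disjoint_subset; apply/subsetP => q qn; rewrite !inE.
  by apply: contraL qn => /(subsetP Qn) /(branch_disjoint F_acyclic yV yn).
apply/properP; split; last first.
  exists n; first exact: setU11.
  by rewrite in_setU1 negb_or eq_sym yn_neq branch_sym.
apply/subsetP => u; rewrite in_setU1 => /predU1P[->|ux]; first by rewrite nx setU1r ?branch_refl.
have u_off : u \notin branch y n.
  by apply: contraNN x_off => /branch_eq <-; rewrite (branch_eq ux) branch_refl.
have uV : u \in Vt.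
  by have [-> | /(branch_sub ux)/setD1P[]] := eqVneq u x; first exact: root_in_tree.
have := branch_cover yV nV yn_neq uV; rewrite (negbTE u_off) => un.
by rewrite nx setU1r.
Qed.

(* A blocking vertex with the largest x-side [y |: branch y x] is a gate. *)
Lemma exists_gate : exists y, gate y.
Proof.
pose blocking y := (y \in Vt) && blocks y.
have xblocks : blocking x by rewrite /blocking root_in_tree /blocks eqxx.
have [y /andP[yV yb] ymax] := @arg_maxnP _ x blocking (fun y => #|y |: branch y x|) xblocks.
exists y; rewrite /gate yV yb /=; apply/forall_inP => z zVy; apply/negP => Qz.
have [n /setIdP[nV yn] zn] := branch_nbr yV zVy.
have Qn : Q \subset branch y n by rewrite -(branch_eq zn).
have [nb /proper_card] := blocks_nbr yV yb yn Qn; apply/negP; rewrite -leqNgt.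
by apply: ymax; rewrite /blocking nb andbT -(tree_vertices_closed x yn).
Qed.

Lemma gate_unique y1 y2 : gate y1 -> gate y2 -> y1 = y2.
Proof.
have [q0 q0Q] := set0Pn _ Q_neq0; have q0V := subsetP Q_tree q0 q0Q.
have off_side y y' : y \in Vt -> y' \in Vt -> y != y' -> splits y -> blocks y' ->
    x \notin branch y y' -> False.
  move=> yV y'V yy' /forall_inP ys /orP y'b x_off.
  have xy' : x != y' by apply: contraNneq x_off => ->; exact: branch_refl.
  have := branch_cover yV y'V yy' root_in_tree; rewrite (negbTE x_off) /= => /branch_eq y'x.
  case: y'b => [|disj]; first by rewrite eq_sym (negbTE xy').
  have Qy' : Q \subset branch y y'.
    apply/subsetP => q qQ; have := branch_cover yV y'V yy' (subsetP Q_tree q qQ).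
    by rewrite -y'x (disjointFl disj qQ) orbF.
  by have := ys y'; rewrite in_setD1 eq_sym yy' y'V Qy' => /(_ isT).
have x_off y y' : y != y' -> x \in branch y y' -> blocks y -> q0 \notin branch y y'.
  move=> yy' xy /orP[/eqP yx|disj].
    by move: xy; rewrite -{1}yx (negbTE (branch_notin F x _)) // eq_sym.
  by rewrite -(branch_eq xy) (disjointFl disj q0Q).
move=> /and3P[y1V b1 s1] /and3P[y2V b2 s2]; apply: contraTeq isT => y12.
have [x21 | /(off_side _ _ y2V y1V _ s2 b1)] := boolP (x \in branch y2 y1); last by rewrite eq_sym.
have [x12 | /(off_side _ _ y1V y2V y12 s1 b2)//] := boolP (x \in branch y1 y2).
have := branch_cover y1V y2V y12 q0V.
by rewrite (negbTE (x_off _ _ y12 x12 b1)) (negbTE (x_off _ _ _ x21 b2)) // eq_sym.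
Qed.

End Gate.

Lemma card3_set3 (T : finType) (A : {set T}) a b c : #|A| = 3 ->
  a \in A -> b \in A -> c \in A -> a != b -> a != c -> b != c -> A = [set a; b; c].
Proof.
move=> A3 aA bA cA ab ac bc; apply/eqP; rewrite eq_sym eqEcard A3; apply/andP; split.
  by apply/subsetP => u; rewrite !inE => /orP[/orP[]|] /eqP->.
by rewrite setUC cardsU1 cards2 ab !inE negb_or eq_sym ac eq_sym bc.
Qed.

Section Pivot.
Variables (V : finType) (F : {set {set V}}) (x : V) (P : {set V}).
Hypothesis F_acyclic : acyclic F.
Local Notation Vt := (tree_vertices F x).
Local Notation branch := (comp_minus F Vt).
Local Notation Q := (P :\ x).
Hypotheses (xP : x \in P) (P_tree : P \subset Vt) (P_card : #|P| = 4).
(* As #|P| = 4: degree at most 3 in the tree, and at most 2 at the points of P. *)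
Hypothesis deg_lt : forall y, y \in Vt -> deg_in F Vt y < #|P :\ y|.

Definition pivot y :=
  [/\ y \in Vt,
      (y \in P /\ deg_in F Vt y = 2) \/ (y \notin P /\ deg_in F Vt y = 3),
      (exists z, z \in Vt :\ y /\ #|branch y z :&: P| = 2) /\
      (exists z, z \in Vt :\ y /\ #|branch y z :&: P| = 1) &
      x = y \/ (exists z, [/\ z \in Vt :\ y, x \in branch y z & #|branch y z :&: P| = 1])].

Local Notation blocks := (blocks F x Q).
Local Notation splits := (splits F x Q).
Local Notation gate := (gate F x Q).

Lemma cardQ : #|Q| = 3.
Proof. by move: P_card; rewrite (cardsD1 x) xP => -[]. Qed.

Lemma pivot_gate y : pivot y -> gate y.
Proof.
move=> [yV _ [[z2 [z2Vy c2]] _] xside]; rewrite /gate yV /=; apply/andP; split.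
  case: xside => [<-|[z [_ xz c1]]]; first by rewrite /blocks eqxx.
  apply/orP; right; rewrite (branch_eq xz) disjoint_subset; apply/subsetP => q qz.
  rewrite inE; apply/setD1P => -[qx qP].
  have /card_le1_eqP le1 : #|branch y z :&: P| <= 1 by rewrite c1.
  have qA : q \in branch y z :&: P by rewrite in_setI qz qP.
  have xA : x \in branch y z :&: P by rewrite in_setI xz xP.
  by rewrite (le1 q x qA xA) eqxx in qx.
apply/forall_inP => z zVy; apply/negP => Qz.
have [q qz2 qx] : exists2 q, q \in branch y z2 :&: P & q != x.
  have /card_gt1P[a [b [aA bA ab]]] : 1 < #|branch y z2 :&: P| by rewrite c2.
  by have [ax | ?] := eqVneq a x; [exists b; rewrite // -ax eq_sym | exists a].
move: qz2; rewrite in_setI => /andP[qz2 qP].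
have /(subsetP Qz) qz : q \in Q by rewrite in_setD1 qx.
have : Q \subset branch y z2 :&: P.
  by rewrite subsetI subsetDl andbT -(branch_eq qz2) (branch_eq qz).
by move/subset_leq_card; rewrite cardQ c2.
Qed.

Lemma same_branch_in_Q y u v : blocks y -> u \in P :\ y -> v \in P :\ y -> u != v ->
  u \in branch y v -> u \in Q.
Proof.
move=> /orP yb /setD1P[uy uP] /setD1P[vy vP] uv uv_br; rewrite in_setD1 uP andbT.
apply/eqP => ux; move: uy uv uv_br; rewrite ux => xy xv; rewrite branch_sym => vx.
case: yb => [/eqP yx | disj]; first by rewrite yx eqxx in xy.
by move: (disjointFr disj vx); rewrite in_setD1 eq_sym xv vP.
Qed.

Lemma pivot_of_pair y s1 s2 : y \in Vt -> s1 \in Q :\ y -> s2 \in Q :\ y -> s1 != s2 ->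
  branch y s1 :&: P = [set s1; s2] ->
  {in P :\ y :\ s1 :\ s2, forall s, branch y s :&: P = [set s]} -> pivot y.
Proof.
move=> yV /setD1P[s1y /setD1P[s1x s1P]] /setD1P[s2y /setD1P[s2x s2P]] s12 br1 br_other.
set D := P :\ y.
have s1D : s1 \in D by rewrite in_setD1 s1y.
have s2D : s2 \in D by rewrite in_setD1 s2y.
have sep : {in D :\ s2 &, forall u v, u \in branch y v -> u = v}.
  move=> u v /setD1P[us2 /setD1P[_ uP]] /setD1P[vs2 vD] uv.
  have [vs1 | vs1] := eqVneq v s1.
    have : u \in branch y s1 :&: P by rewrite in_setI -vs1 uv uP.
    by rewrite br1 in_set2 (negbTE us2) orbF vs1 => /eqP.
  have : u \in branch y v :&: P by rewrite in_setI uv uP.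
  by rewrite br_other ?in_set1 => [/eqP|] //; rewrite 2!in_setD1 vs2 vs1.
have deg_eq : (deg_in F Vt y).+1 = #|D|.
  apply/eqP; rewrite eqn_leq deg_lt // (cardsD1 s2 D) s2D ltnS.
  apply: (card_le_deg yV) sep; apply/subsetP => u /setD1P[_ /setD1P[uy uP]].
  by rewrite in_setD1 uy (subsetP P_tree).
have card_y : (y \in P) + #|D| = 4 by rewrite -cardsD1.
have D_card : #|D| = (#|D :\ s1 :\ s2|).+2.
  by rewrite (cardsD1 s1 D) s1D (cardsD1 s2 (D :\ s1)) in_setD1 eq_sym s12 s2D.
have others_in s : s \in D :\ s1 :\ s2 -> s \in Vt :\ y /\ #|branch y s :&: P| = 1.
  move=> sD; rewrite br_other // cards1; move: sD => /setD1P[_ /setD1P[_ /setD1P[sy sP]]].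
  by rewrite in_setD1 sy (subsetP P_tree).
split=> //.
- have [yP | yP] := boolP (y \in P); [left | right]; split=> //.
    by move: card_y; rewrite yP -deg_eq add1n => -[].
  by move: card_y; rewrite (negPf yP) -deg_eq add0n => -[].
- split; first by exists s1; rewrite in_setD1 s1y (subsetP P_tree) // br1 cards2 s12.
  have [s3 s3D] : exists s3, s3 \in D :\ s1 :\ s2.
    apply/set0Pn; rewrite -card_gt0; move: card_y; rewrite D_card.
    by case: (y \in P); case: #|_|.
  by exists s3; apply: others_in.
have [<- | xy] := eqVneq y x; [by left | right].
have xD : x \in D :\ s1 :\ s2.
  by rewrite 3!in_setD1 xP (eq_sym x s2) s2x (eq_sym x s1) s1x (eq_sym x y) xy.
by exists x; rewrite branch_refl; case: (others_in x xD).
Qed.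

(* P :\ y has more points than y has branches, and x is alone in its branch. *)
Lemma gate_shared_branch y : gate y ->
  exists s1 s2, [/\ s1 \in Q :\ y, s2 \in Q :\ y, s1 != s2 & s2 \in branch y s1].
Proof.
move=> /and3P[yV yb _]; set D := P :\ y.
have D_tree : D \subset Vt :\ y.
  by apply/subsetP => u /setD1P[uy uP]; rewrite in_setD1 uy (subsetP P_tree).
have : ~~ [forall u in D, forall v in D, (u \in branch y v) ==> (u == v)].
  apply/negP => /forall_inP sep; have := deg_lt yV; rewrite ltnNge (card_le_deg yV D_tree) //.
  by move=> u v uD vD /(implyP (forall_inP (sep u uD) v vD)) /eqP.
case/forall_inPn => s2 s2D /forall_inPn[s1 s1D]; rewrite negb_imply => /andP[s21 s21'].
have s12 : s1 != s2 by rewrite eq_sym.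
exists s1, s2; split=> //; move: (s1D) (s2D) => /setD1P[s1y _] /setD1P[s2y _].
  by rewrite in_setD1 s1y (same_branch_in_Q yb s1D s2D s12) // branch_sym.
by rewrite in_setD1 s2y (same_branch_in_Q yb s2D s1D s21' s21).
Qed.

Lemma gate_pivot y : gate y -> pivot y.
Proof.
move=> yg; have [s1 [s2 [s1Qy s2Qy s12 s21]]] := gate_shared_branch yg.
move: yg (s1Qy) (s2Qy) => /and3P[yV yb /forall_inP ys].
move=> /setD1P[s1y /[dup] s1Q /setD1P[_ s1P]] /setD1P[s2y /[dup] s2Q /setD1P[_ s2P]].
have QE s : s \in Q -> s != s1 -> s != s2 -> Q = [set s1; s2; s].
  by move=> sQ ss1 ss2; apply: (card3_set3 cardQ s1Q s2Q sQ s12); rewrite eq_sym.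
have in_Py u s : s \in P :\ y -> u \in P -> u \in branch y s -> u \in P :\ y.
  by move=> /setD1P[sy _] uP us; rewrite in_setD1 uP (branch_neq sy us).
have s1D : s1 \in P :\ y by rewrite in_setD1 s1y.
have br1 : branch y s1 :&: P = [set s1; s2].
  apply/setP => u; rewrite in_setI in_set2; apply/idP/idP; last first.
    by case/orP => /eqP->; rewrite ?branch_refl ?s21 ?s1P ?s2P.
  move=> /andP[us1 uP]; apply/negPn/negP; rewrite negb_or => /andP[us1' us2'].
  have uQ := same_branch_in_Q yb (in_Py u s1 s1D uP us1) s1D us1' us1.
  have s1Vy : s1 \in Vt :\ y by rewrite in_setD1 s1y (subsetP P_tree).
  have := ys s1 s1Vy; rewrite (QE u uQ us1' us2') => /negP; apply.
  apply/subsetP => t; rewrite in_setU in_set2 in_set1.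
  by move=> /orP[/orP[]|] /eqP->; rewrite ?branch_refl.
have others s : s \in P :\ y :\ s1 :\ s2 -> branch y s :&: P = [set s].
  move=> /setD1P[ss2 /setD1P[ss1 sD]]; have /setD1P[_ sP] := sD.
  apply/setP => u; rewrite in_setI in_set1; apply/idP/idP; last first.
    by move/eqP->; rewrite branch_refl sP.
  move=> /andP[us uP]; apply/negPn/negP => us'; have uD := in_Py u s sD uP us.
  have uQ := same_branch_in_Q yb uD sD us' us.
  have sQ : s \in Q by apply: (same_branch_in_Q yb sD uD); rewrite 1?eq_sym // branch_sym.
  have s_off : s \notin branch y s1.
    apply/negP => ss1'; have : s \in branch y s1 :&: P by rewrite in_setI ss1' sP.
    by rewrite br1 in_set2 (negbTE ss1) (negbTE ss2).
  have u_off : u \notin branch y s1.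
    by apply: contraNN s_off => /branch_eq <-; rewrite branch_sym.
  have : u \in [set s1; s2; s] by rewrite -(QE s sQ ss1 ss2).
  rewrite in_setU in_set2 in_set1 (negbTE us') orbF.
  by case/orP => /eqP uE; move: u_off; rewrite uE ?branch_refl ?s21.
exact: pivot_of_pair yV s1Qy s2Qy s12 br1 others.
Qed.

Theorem pivot_exists_unique : exists! y, pivot y.
Proof.
have Q_tree : Q \subset Vt by apply: subset_trans (subD1set P x) P_tree.
have Q_neq0 : Q != set0 by rewrite -card_gt0 cardQ.
have [y yg] := exists_gate x F_acyclic Q_neq0.
exists y; split; first exact: gate_pivot.
by move=> y' /pivot_gate; apply: gate_unique.
Qed.

End Pivot.

Lemma subset_tree_vertices (V : finType) (F : {set {set V}}) (r x : V) (A : {set V}) :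
  {subset A <= connect (sadj F) r} -> x \in A -> A \subset tree_vertices F x.
Proof.
move=> Ar xA; apply/subsetP => u uA; rewrite inE; apply: connect_trans (Ar u uA).
by rewrite (sym_connect_sym (@sadj_sym _ F)); apply: Ar.
Qed.

Lemma in_edges_on (V : finType) (adj : rel V) (W : {set V}) s t : symmetric adj ->
  [set s; t] \in edges_on adj W -> s != t -> [&& adj s t, s \in W & t \in W].
Proof.
move=> adj_sym; rewrite inE => /existsP[s' /existsP[t' /and4P[s'W t'W st' /eqP st]]] s_t.
have : s \in [set s'; t'] by rewrite -st set21.
have : t \in [set s'; t'] by rewrite -st set22.
rewrite !inE => /orP[]/eqP tE /orP[]/eqP sE; rewrite {}sE {}tE ?eqxx // in s_t *.
  by rewrite adj_sym st' s'W t'W.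
by rewrite st' s'W t'W.
Qed.

Lemma deg_forest_le (V : finType) (adj : rel V) (W : {set V}) (T F : {set {set V}})
    (Vt : {set V}) y :
  symmetric adj -> T \subset edges_on adj W -> F \subset edges_on adj W -> T :&: F = set0 ->
  (forall u z, u \in W -> z \in W -> connect (sadj T) u z) ->
  deg_in F Vt y <= #|[set z in W | adj y z]|.-1.
Proof.
move=> adj_sym TE FE TF0 T_conn; rewrite /deg_in.
have [->|[z1]] := set_0Vmem [set z in Vt | sadj F y z]; first by rewrite cards0.
rewrite inE => /andP[_ /andP[yz1 Fyz1]].
have /and3P[_ yW z1W] := in_edges_on adj_sym (subsetP FE _ Fyz1) yz1.
(* The spanning tree T keeps an edge [y; c] at y, which is not an edge of F. *)
have [c /andP[yc Tyc]] : exists c, sadj T y c.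
  have /connectP[[|c p] /= pth z1E] := T_conn _ _ yW z1W; first by rewrite z1E eqxx in yz1.
  by case/andP: pth => yc _; exists c.
have /and3P[ayc _ cW] := in_edges_on adj_sym (subsetP TE _ Tyc) yc.
have sub : [set z in Vt | sadj F y z] \subset [set z in W | adj y z] :\ c.
  apply/subsetP => z; rewrite inE => /andP[_ /andP[yz Fyz]].
  have /and3P[ayz _ zW] := in_edges_on adj_sym (subsetP FE _ Fyz) yz.
  rewrite in_setD1 inE ayz zW !andbT; apply: (contraTneq _ Fyz) => ->.
  apply/negP => Fyc; have : [set y; c] \in T :&: F by rewrite inE Tyc Fyc.
  by rewrite TF0 inE.
apply: leq_trans (subset_leq_card sub) _.
by rewrite (cardsD1 c [set z in W | adj y z]) inE cW ayc.
Qed.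

Lemma card_nbrs_in_lt (V : finType) (adj : rel V) (W : {set V}) y t :
  adj y t -> t \notin W -> #|[set z in W | adj y z]| < #|[set z | adj y z]|.
Proof.
move=> yt tW; rewrite (cardsD1 t [set z | adj y z]) inE yt add1n ltnS subset_leq_card //.
apply/subsetP => z; rewrite in_setD1 !inE => /andP[zW ->]; rewrite andbT.
by apply: contraNneq tW => <-.
Qed.

Lemma card_set4_swap (T : finType) (N : {set T}) t a b c x : #|N| = 4 ->
  N = [set t; a; b; c] -> x \notin N -> #|[set a; b; c; x]| = 4.
Proof.
move=> N4 NE xN; have abc3 : #|[set a; b; c]| = 3.
  apply/eqP; rewrite eqn_leq; apply/andP; split.
    by apply: leq_trans (leq_card_setU _ _) _; rewrite cards2 cards1 addn1 ltnS; case: (a != b).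
  by rewrite -ltnS -N4 NE -!setUA cardsU1 setUA -add1n leq_add2r leq_b1.
have x_abc : x \notin [set a; b; c].
  by apply: contraNN xN => xabc; rewrite NE -!setUA setU1r // setUA.
by rewrite setUC cardsU1 x_abc abc3.
Qed.

Section TwoAdjacentVertices.
Variables (V : finType) (adj : rel V) (v w a b c d e f x : V) (p1 p2 : {set V}).
Hypotheses (adj_sym : symmetric adj) (K_reg : forall u, #|[set z | adj u z]| = 4).
Hypothesis hnocommon : forall z, ~~ (adj v z && adj w z).
Hypothesis hNw : [set z | adj w z] = [set v; a; b; c].
Hypothesis hNv : [set z | adj v z] = [set w; d; e; f].
Hypothesis hpart : p1 :|: p2 = [set a; b; c; d; e; f].
Hypothesis hp1 : (p1 = [set a; b; c; x] /\ x \in [set d; e; f]) \/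
                 (p1 = [set d; e; f; x] /\ x \in [set a; b; c]).

Lemma x_in_p1 : x \in p1.
Proof. by case: hp1 => -[-> _]; rewrite !inE eqxx orbT. Qed.

Lemma nbrs_w_abc : {subset [set a; b; c] <= [set z | adj w z]}.
Proof. by rewrite hNw => z; rewrite !inE => /orP[/orP[]|] ->; rewrite ?orbT. Qed.

Lemma nbrs_v_def : {subset [set d; e; f] <= [set z | adj v z]}.
Proof. by rewrite hNv => z; rewrite !inE => /orP[/orP[]|] ->; rewrite ?orbT. Qed.

Lemma card_p1 : #|p1| = 4.
Proof.
case: hp1 => -[-> /[dup] xN]; [move/nbrs_v_def | move/nbrs_w_abc]; rewrite inE => xadj.
  apply: (card_set4_swap (K_reg w) hNw); rewrite inE.
  by apply: contraNN (hnocommon x) => ->; rewrite xadj.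
apply: (card_set4_swap (K_reg v) hNv); rewrite inE.
by apply: contraNN (hnocommon x) => ->; rewrite xadj.
Qed.

Lemma p1_adj_vw y : y \in p1 -> adj y v || adj y w.
Proof.
move=> yp1; have : y \in p1 :|: p2 by rewrite inE yp1.
have -> : p1 :|: p2 = [set a; b; c] :|: [set d; e; f] by rewrite hpart !setUA.
by rewrite in_setU => /orP[/nbrs_w_abc | /nbrs_v_def]; rewrite inE adj_sym => ->; rewrite ?orbT.
Qed.

Lemma card_nbrs_off_vw_lt y : #|[set z in [set: V] :\ v :\ w | adj y z]|.-1 < #|p1 :\ y|.
Proof.
set W := [set: V] :\ v :\ w.
suff [NW_le p1y_pos] : #|[set z in W | adj y z]| <= #|p1 :\ y| /\ 0 < #|p1 :\ y|.
  by move: NW_le; case: #|_| => [_|n] //=.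
have := card_p1; rewrite (cardsD1 y); case: (boolP (y \in p1)) => [yp1 | _] card_y.
  have -> : #|p1 :\ y| = 3 by move: card_y; rewrite add1n => -[].
  have [t yt tW] : exists2 t, adj y t & t \notin W.
    by case/orP: (p1_adj_vw yp1) => yt; [exists v | exists w]; rewrite // !inE eqxx ?andbF.
  by split=> //; rewrite -ltnS -(K_reg y) (card_nbrs_in_lt yt tW).
have -> : #|p1 :\ y| = 4 by move: card_y; rewrite add0n.
split=> //; rewrite -(K_reg y); apply: subset_leq_card.
by apply/subsetP => z; rewrite !inE => /andP[].
Qed.

End TwoAdjacentVertices.


Theorem lemma4p3 (V : finType) (adj : rel V)
  (adj_sym : symmetric adj) (adj_irr : irreflexive adj)
  (K_conn : forall u z : V, connect adj u z)
  (K_reg : forall u : V, #|[set z | adj u z]| = 4)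
  (K_odd : odd #|V|)
  (v w a b c d e f : V)
  (hvw : adj v w)
  (hnocommon : forall z : V, ~~ (adj v z && adj w z))
  (hNw : [set z | adj w z] = [set v; a; b; c])
  (hNv : [set z | adj v z] = [set w; d; e; f])
  (p1 p2 : {set V}) (x : V)
  (hpart : p1 :|: p2 = [set a; b; c; d; e; f])
  (hdisj : p1 :&: p2 = set0)
  (hp1 : (p1 = [set a; b; c; x] /\ x \in [set d; e; f]) \/
         (p1 = [set d; e; f; x] /\ x \in [set a; b; c]))
  (T F : {set {set V}})
  (htau : in_RP ([set: V] :\ v :\ w) (edges_on adj ([set: V] :\ v :\ w))
                p1 p2 T F) :
  let Vt := tree_vertices F x in
  exists! y : V,
    [/\ y \in Vt,
        (y \in p1 /\ deg_in F Vt y = 2) \/ (y \notin p1 /\ deg_in F Vt y = 3),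
        (exists z, z \in Vt :\ y /\ #|comp_minus F Vt y z :&: p1| = 2) /\
        (exists z, z \in Vt :\ y /\ #|comp_minus F Vt y z :&: p1| = 1) &
        x = y \/ (exists z, [/\ z \in Vt :\ y, x \in comp_minus F Vt y z &
                                #|comp_minus F Vt y z :&: p1| = 1])].
Proof.
move=> Vt; case: htau => _ TF0 [T_sub _ T_conn] [F_sub F_acyclic [r1 [r2 [_ [_ p1_r1 _]]]]].
have xp1 := x_in_p1 hp1.
have p1_tree := subset_tree_vertices p1_r1 xp1.
apply: (pivot_exists_unique F_acyclic xp1 p1_tree (card_p1 K_reg hnocommon hNw hNv hp1)).
move=> y _; apply: leq_ltn_trans (deg_forest_le Vt y adj_sym T_sub F_sub TF0 T_conn) _.
exact: (card_nbrs_off_vw_lt adj_sym K_reg hnocommon hNw hNv hpart hp1).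
Qed.
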